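(* Let $\theta\in\mathbb{R}^{m\times n}$ and $\overline\theta = \frac{1}{mn}\sum_{i=1}^m\sum_{j=1}^n\theta[i,j]$. Then $$\sum_{i=1}^m\sum_{j=1}^n(\theta[i,j]-\overline\theta)^2 \leq \Big(5 + \frac{4mn}{\min(n^2,m^2)}\Big)\mathrm{TV}(\theta)^2.$$ In particular, when $m=n$, $\sum_{i=1}^n\sum_{j=1}^n(\theta[i,j]-\overline\theta)^2 \le 9\,\mathrm{TV}(\theta)^2$.
   Context: For $\theta\in\mathbb{R}^{m\times n}$, $\mathrm{TV}(\theta) = \sum_{i\in[m]}\sum_{j\in[n-1]}|\theta[i,j+1]-\theta[i,j]| + \sum_{i\in[m-1]}\sum_{j\in[n]}|\theta[i+1,j]-\theta[i,j]|$ (unnormalized total variation over the edges of the $m\times n$ grid graph). *)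

From mathcomp Require Import all_boot all_order all_algebra.
Set Implicit Arguments. Unset Strict Implicit. Unset Printing Implicit Defensive.
Import Order.TTheory GRing.Theory Num.Theory.
Local Open Scope ring_scope.

(* Unnormalized total variation of theta over the edges of the m x n grid graph:
   horizontal edges (i,j)-(i,j+1) and vertical edges (i,j)-(i+1,j). *)
Definition TV (R : numDomainType) (m n : nat) (theta : 'M[R]_(m, n)) : R :=
  \sum_(i < m) \sum_(j < n) \sum_(j' < n | j' == j.+1 :> nat)
      `|theta i j' - theta i j|
  + \sum_(i < m) \sum_(i' < m | i' == i.+1 :> nat) \sum_(j < n)
      `|theta i' j - theta i j|.

Definition mean (R : numFieldType) (m n : nat) (theta : 'M[R]_(m, n)) : R :=
  (\sum_(i < m) \sum_(j < n) theta i j) / (m * n)%:R.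

From mathcomp Require Import all_boot all_order all_algebra.
From mathcomp Require Import ring zify.
Import Order.TTheory GRing.Theory Num.Theory.
Set Implicit Arguments. Unset Strict Implicit.
Local Open Scope ring_scope.

(* For two cells (i,j) and (k,l), the path through (i,l) bounds |theta[i,j] - theta[k,l]| by
   the variation of row i plus that of column l, and the path through (k,j) bounds it by the
   variation of column j plus that of row k.  Multiplying the two bounds, the sum of squared
   differences over all pairs of cells factorizes as (n H + m V)^2 <= ((n + m) TV)^2, where H
   and V are the total horizontal and vertical variations.  That sum equals 2mn times the sum
   of squared deviations from the mean, and (n + m)^2 / 2mn <= 2mn / min(n^2, m^2) is below
   the stated constant. *)

Section Variation.
Variables (R : numDomainType) (n : nat) (g : 'I_n -> R).

Definition variation_step (j : 'I_n) : R :=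
  \sum_(j' < n | j' == j.+1 :> nat) `|g j' - g j|.

Definition variation : R := \sum_(j < n) variation_step j.

Lemma sum_variation_step_ge0 (P : pred 'I_n) : 0 <= \sum_(j | P j) variation_step j.
Proof. by apply: sumr_ge0 => j _; apply: sumr_ge0 => *; exact: normr_ge0. Qed.

Lemma variation_ge0 : 0 <= variation.
Proof. exact: sum_variation_step_ge0. Qed.

Lemma variation_stepE (j j' : 'I_n) : j' = j.+1 :> nat ->
  variation_step j = `|g j' - g j|.
Proof.
by move=> j'E; rewrite /variation_step (big_pred1 j') // => k /=; rewrite -j'E.
Qed.

Lemma dist_le_partial_variation (a b : 'I_n) : (a <= b)%N ->
  `|g b - g a| <= \sum_(j < n | (a <= j < b)%N) variation_step j.
Proof.
case: b => b; elim: b => [|k IH] ltkn le_ak.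
  have -> : a = Ordinal ltkn by apply: val_inj; apply/eqP; rewrite -leqn0.
  by rewrite subrr normr0 sum_variation_step_ge0.
have [eq_ak | ne_ak] := eqVneq (a : nat) k.+1.
  have -> : a = Ordinal ltkn by apply: val_inj.
  by rewrite subrr normr0 sum_variation_step_ge0.
have le_ak' : (a <= k)%N by rewrite -ltnS ltn_neqAle ne_ak.
pose k' := Ordinal (ltnW ltkn).
rewrite (bigD1 k') /= ?le_ak' ?ltnSn //.
rewrite (eq_bigl (fun j : 'I_n => (a <= j < k)%N)); last first.
  by move=> j; rewrite -val_eqE /= ltnS ltn_neqAle [(_ != _) && _]andbC andbA.
rewrite (variation_stepE (j' := Ordinal ltkn)) //.
apply: le_trans (ler_distD (g k') _ _) _.
by rewrite lerD // IH.
Qed.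

Lemma dist_le_variation (a b : 'I_n) : `|g a - g b| <= variation.
Proof.
wlog le_ab : a b / (a <= b)%N.
  by move=> W; case: (leqP a b) => [|/ltnW] /W //; rewrite distrC.
rewrite distrC; apply: le_trans (dist_le_partial_variation le_ab) _.
by rewrite [X in _ <= X](bigID (fun j : 'I_n => (a <= j < b)%N)) /= lerDl
  sum_variation_step_ge0.
Qed.

End Variation.

Section PairwiseVariance.
Variables (R : numFieldType) (T : finType) (x : T -> R).

Lemma sumr_quadratic (a b c : R) :
  \sum_p (a * x p ^+ 2 + b * x p + c)
    = a * \sum_p x p ^+ 2 + b * \sum_p x p + c * #|T|%:R.
Proof. by rewrite !big_split /= -!mulr_sumr sumr_const mulr_natr. Qed.

Lemma sum_sqr_diff_pairs :
  \sum_p \sum_q (x p - x q) ^+ 2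
    = 2 * #|T|%:R * \sum_p (x p - (\sum_q x q) / #|T|%:R) ^+ 2.
Proof.
have [T0 | T_gt0] := posnP #|T|.
  rewrite T0 mulr0 mul0r big_pred0 // => p.
  by have := card0_eq T0 p; rewrite !inE.
set N : R := #|T|%:R; set s1 := \sum_q x q.
have N_neq0 : N != 0 by rewrite pnatr_eq0 -lt0n.
transitivity (\sum_p (N * x p ^+ 2 + (-2 * s1) * x p + \sum_q x q ^+ 2)).
  apply: eq_bigr => p _.
  rewrite (eq_bigr (fun q => 1 * x q ^+ 2 + (-2 * x p) * x q + x p ^+ 2));
    last by move=> q _; ring.
  by rewrite sumr_quadratic /N /s1; ring.
rewrite [in RHS](eq_bigr (fun p =>
  1 * x p ^+ 2 + (-2 * (s1 / N)) * x p + (s1 / N) ^+ 2)); last by move=> p _; ring.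
by rewrite !sumr_quadratic /N /s1; field.
Qed.

End PairwiseVariance.

Lemma sum_pairs_mul_cross (R : comPzSemiRingType) (I J K L : finType)
    (F : I -> L -> R) (G : J -> K -> R) :
  \sum_(p : I * J) \sum_(q : K * L) F p.1 q.2 * G p.2 q.1
    = (\sum_i \sum_l F i l) * (\sum_j \sum_k G j k).
Proof.
transitivity (\sum_i \sum_j \sum_k \sum_l F i l * G j k).
  by rewrite [RHS]pair_big; apply: eq_bigr => p _; rewrite pair_big.
rewrite mulr_suml; apply: eq_bigr => i _ /=.
under eq_bigr => j _ do rewrite exchange_big.
rewrite [LHS]exchange_big mulr_suml; apply: eq_bigr => l _ /=.
rewrite mulr_sumr; apply: eq_bigr => j _.
by rewrite mulr_sumr.
Qed.

Section GridVariation.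
Variables (R : realDomainType) (m n : nat) (theta : 'M[R]_(m, n)).

Definition row_variation (i : 'I_m) : R := variation (fun j => theta i j).
Definition col_variation (j : 'I_n) : R := variation (fun i => theta i j).

Lemma TV_row_col_variation :
  TV theta = \sum_i row_variation i + \sum_j col_variation j.
Proof.
rewrite /TV /row_variation /col_variation /variation /variation_step.
by congr (_ + _); rewrite exchange_big; apply: eq_bigr => i _; rewrite exchange_big.
Qed.

Lemma sqr_diff_le_row_col_variation i j k l :
  (theta i j - theta k l) ^+ 2
    <= (row_variation i + col_variation l) * (col_variation j + row_variation k).
Proof.
rewrite -real_normK ?num_real // expr2.
apply: ler_pM; rewrite ?normr_ge0 //.
  apply: le_trans (ler_distD (theta i l) _ _) _.
  by rewrite lerD // (dist_le_variation (fun j => theta i j),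
                      dist_le_variation (fun i => theta i l)).
apply: le_trans (ler_distD (theta k j) _ _) _.
by rewrite lerD // (dist_le_variation (fun i => theta i j),
                    dist_le_variation (fun j => theta k j)).
Qed.

Lemma sum_sqr_diff_le_TV :
  \sum_(p : 'I_m * 'I_n) \sum_(q : 'I_m * 'I_n)
      (theta p.1 p.2 - theta q.1 q.2) ^+ 2
    <= ((n + m)%:R * TV theta) ^+ 2.
Proof.
set H := \sum_i row_variation i; set V := \sum_j col_variation j.
have H_ge0 : 0 <= H by apply: sumr_ge0 => i _; exact: variation_ge0.
have V_ge0 : 0 <= V by apply: sumr_ge0 => j _; exact: variation_ge0.
have row_col_sum : \sum_i \sum_l (row_variation i + col_variation l) = H *+ n + V *+ m.
  under eq_bigr => i _ do rewrite big_split /= sumr_const card_ord.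
  by rewrite big_split /= sumrMnl sumr_const card_ord.
have col_row_sum : \sum_j \sum_k (col_variation j + row_variation k) = H *+ n + V *+ m.
  under eq_bigr => j _ do rewrite big_split /= sumr_const card_ord.
  by rewrite big_split /= sumrMnl sumr_const card_ord addrC.
apply: le_trans (_ : \sum_(p : 'I_m * 'I_n) \sum_(q : 'I_m * 'I_n)
  (row_variation p.1 + col_variation q.2) * (col_variation p.2 + row_variation q.1) <= _).
  by apply: ler_sum => p _; apply: ler_sum => q _; exact: sqr_diff_le_row_col_variation.
rewrite (sum_pairs_mul_cross (fun i l => row_variation i + col_variation l)
                            (fun j k => col_variation j + row_variation k)).
rewrite row_col_sum col_row_sum -expr2 TV_row_col_variation -/H -/V.
rewrite lerXn2r ?nnegrE ?mulr_ge0 ?addr_ge0 ?mulrn_wge0 //.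
rewrite -[H *+ n]mulr_natl -[V *+ m]mulr_natl natrD mulrDl !mulrDr.
by rewrite lerD ?lerDl ?lerDr ?mulr_ge0.
Qed.

End GridVariation.

Lemma sum_sqr_dev_le_TV (R : realFieldType) (m n : nat) (theta : 'M[R]_(m, n)) :
  2 * (m * n)%:R * \sum_i \sum_j (theta i j - mean theta) ^+ 2
    <= ((n + m)%:R * TV theta) ^+ 2.
Proof.
have cardE : #|{: 'I_m * 'I_n}| = (m * n)%N by rewrite card_prod !card_ord.
rewrite /mean pair_big [\sum_i \sum_j theta i j]pair_big -cardE.
rewrite -(sum_sqr_diff_pairs (fun p : 'I_m * 'I_n => theta p.1 p.2)).
exact: sum_sqr_diff_le_TV.
Qed.

Lemma sqr_addn_mul_minn_le (m n : nat) :
  ((n + m) ^ 2 * minn (n ^ 2) (m ^ 2) <= 4 * (m * n) ^ 2)%N.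
Proof.
wlog le_nm : m n / (n <= m)%N.
  move=> W; have [|/ltnW le_mn] := leqP n m; first exact: W.
  by rewrite [(n + m)%N]addnC minnC [(m * n)%N]mulnC; exact: W.
have le_sqr : ((n + m) ^ 2 <= (2 * m) ^ 2)%N by rewrite leq_exp2r //; lia.
rewrite (minn_idPl _) ?leq_exp2r // expnMn mulnA leq_mul2r.
by rewrite -[4%N]/(2 ^ 2)%N -expnMn le_sqr orbT.
Qed.

Lemma grid_constant_ge (R : realFieldType) (m n : nat) :
  (0 < m)%N -> (0 < n)%N ->
  (n + m)%:R ^+ 2
    <= 2 * (m * n)%:R * (5 + 4 * (m * n)%:R / (minn (n ^ 2) (m ^ 2))%:R) :> R.
Proof.
move=> m_gt0 n_gt0; set M := minn _ _.
have M_gt0 : (0 : R) < M%:R by rewrite ltr0n leq_min !expn_gt0 m_gt0 n_gt0.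
rewrite -(ler_pM2r M_gt0).
have -> : 2 * (m * n)%:R * (5 + 4 * (m * n)%:R / M%:R) * M%:R
    = (10 * (m * n) * M + 8 * (m * n) ^ 2)%:R :> R.
  by rewrite natrD !natrM; field; rewrite gt_eqF.
rewrite -natrX -natrM ler_nat.
by have := sqr_addn_mul_minn_le m n; lia.
Qed.

Theorem proposition4p3 (R : realFieldType) (m n : nat)
  (hm : (0 < m)%N) (hn : (0 < n)%N) (theta : 'M[R]_(m, n)) :
  \sum_(i < m) \sum_(j < n) (theta i j - mean theta) ^+ 2
    <= (5 + 4 * (m * n)%:R / (minn (n ^ 2) (m ^ 2))%:R) * TV theta ^+ 2
  /\ (m = n ->
      \sum_(i < m) \sum_(j < n) (theta i j - mean theta) ^+ 2
        <= 9 * TV theta ^+ 2).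
Proof.
have sum_dev_le :
    \sum_(i < m) \sum_(j < n) (theta i j - mean theta) ^+ 2
      <= (5 + 4 * (m * n)%:R / (minn (n ^ 2) (m ^ 2))%:R) * TV theta ^+ 2.
  have mn_gt0 : (0 : R) < 2 * (m * n)%:R by rewrite mulr_gt0 // ltr0n muln_gt0 hm.
  rewrite -(ler_pM2l mn_gt0); apply: le_trans (sum_sqr_dev_le_TV theta) _.
  by rewrite exprMn [X in _ <= X]mulrA ler_wpM2r ?sqr_ge0 // grid_constant_ge.
split=> // eq_mn; subst m; move: sum_dev_le.
rewrite minnn mulnn -mulrA divff ?mulr1 ?pnatr_eq0 -?lt0n ?expn_gt0 ?hn //.
by rewrite -[5 + 4]natrD.
Qed.
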